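(* Let $I$ be a set, $\mathcal{E}=(E_i)_{i\in I}$ a family of nonempty sets, $R,S$ multiple relations in $\mathcal{E}$, and $L\subseteq I$ with $J_R\cap J_S\subseteq L\subseteq J_R\cup J_S$. Then $(R\bowtie S)_{|L}=R_{|L\cap J_R}\bowtie S_{|L\cap J_S}$. In particular, if $J_R\cap J_S=\emptyset$ this holds for every $L\subseteq J_R\cup J_S$.
   Context: For $J\subseteq I$, $Z_J=\prod_{j\in J}E_j$ ($Z_\emptyset=\{\bullet\}$). A multiple relation is $R=(J_R,G_R)$ with $J_R\subseteq I$, $G_R\subseteq Z_{J_R}$; $R_{|K}=(K,\{x_{|K}:x\in G_R\})$ for $K\subseteq J_R$; $R\bowtie S=(J_R\cup J_S,\{x\in Z_{J_R\cup J_S}: x_{|J_R}\in G_R,\ x_{|J_S}\in G_S\})$. *)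

Set Implicit Arguments.

Section MultipleRelations.
Variables (I : Type) (E : I -> Type).

Definition Z (J : I -> Prop) : Type := forall j : {i | J i}, E (proj1_sig j).

Definition restrZ (J K : I -> Prop) (h : forall i, K i -> J i) (x : Z J) : Z K :=
  fun k => x (exist J (proj1_sig k) (h _ (proj2_sig k))).

Record mrel := MRel { J_ : I -> Prop ; G_ : Z J_ -> Prop }.

Definition restr (R : mrel) (K : I -> Prop) (h : forall i, K i -> J_ R i) : mrel :=
  @MRel K (fun y => exists x, G_ R x /\ @restrZ (J_ R) K h x = y).

Definition unionJ (R S : mrel) : I -> Prop := fun i => J_ R i \/ J_ S i.

Definition join (R S : mrel) : mrel :=
  @MRel (unionJ R S)
    (fun x => G_ R (@restrZ (unionJ R S) (J_ R) (fun i (hi : J_ R i) => or_introl hi) x)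
           /\ G_ S (@restrZ (unionJ R S) (J_ S) (fun i (hi : J_ S i) => or_intror hi) x)).

Definition interL (L J : I -> Prop) : I -> Prop := fun i => L i /\ J i.

Definition interL_incl (L J : I -> Prop) : forall i, interL L J i -> J i :=
  fun i h => proj2 h.

End MultipleRelations.

(** Restricting [R ⋈ S] to [L] keeps exactly the tuples whose traces on
    [L ∩ J_R] and [L ∩ J_S] come from [R] and [S].  Conversely, given [a ∈ G_R]
    and [b ∈ G_S] whose restrictions to [L ∩ J_R] and [L ∩ J_S] are compatible,
    [a] and [b] agree on [J_R ∩ J_S ⊆ L], so they glue to a tuple of [R ⋈ S]
    whose restriction to [L] is the given one.  Gluing needs no choice of
    default values. *)

From Stdlib Require Import FunctionalExtensionality PropExtensionality ProofIrrelevance ClassicalEpsilon.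

Section Tuples.
Context {I : Type} {E : I -> Type}.

Lemma Z_irrel (J : I -> Prop) (x : Z E J) (i : I) (p q : J i) :
  x (exist J i p) = x (exist J i q).
Proof. now rewrite (proof_irrelevance _ p q). Qed.

Lemma Z_ext (J : I -> Prop) (x y : Z E J) :
  (forall i (p : J i), x (exist J i p) = y (exist J i p)) -> x = y.
Proof.
  intros Hxy; apply functional_extensionality_dep; intros [i p]; apply Hxy.
Qed.

Lemma restrZ_id (J : I -> Prop) (h : forall i, J i -> J i) (x : Z E J) :
  restrZ _ h x = x.
Proof. apply Z_ext; intros i p; unfold restrZ; simpl; apply Z_irrel. Qed.

Lemma restrZ_eq_at {J J' K : I -> Prop} {h : forall i, K i -> J i}
  {h' : forall i, K i -> J' i} {x : Z E J} {x' : Z E J'} :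
  restrZ _ h x = restrZ _ h' x' ->
  forall i (k : K i) (p : J i) (p' : J' i), x (exist J i p) = x' (exist J' i p').
Proof.
  intros Hx i k p p'.
  rewrite (Z_irrel _ x _ p (h i k)), (Z_irrel _ x' _ p' (h' i k)).
  exact (f_equal (fun z => z (exist K i k)) Hx).
Qed.

Lemma Z_glue (U J K : I -> Prop) (hJ : forall i, J i -> U i)
  (hK : forall i, K i -> U i) (cover : forall i, U i -> J i \/ K i)
  (a : Z E J) (b : Z E K) :
  (forall i (p : J i) (q : K i), a (exist J i p) = b (exist K i q)) ->
  exists y : Z E U, restrZ _ hJ y = a /\ restrZ _ hK y = b.
Proof.
  intros Hab.
  assert (right_of_cover : forall i, U i -> ~ J i -> K i)
    by (intros i u np; destruct (cover i u); [contradiction | assumption]).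
  exists (fun k : {i | U i} =>
    match excluded_middle_informative (J (proj1_sig k)) with
    | left p => a (exist J _ p)
    | right np => b (exist K _ (right_of_cover _ (proj2_sig k) np))
    end).
  split; apply Z_ext; intros i p; unfold restrZ; simpl.
  - destruct (excluded_middle_informative (J i)); [apply Z_irrel | contradiction].
  - destruct (excluded_middle_informative (J i)); [apply Hab | apply Z_irrel].
Qed.

Lemma mrel_eq_reindex (J1 J2 : I -> Prop) (G1 : Z E J1 -> Prop) (G2 : Z E J2 -> Prop)
  (e : forall i, J1 i <-> J2 i) (h : forall i, J2 i -> J1 i) :
  (forall x, G1 x <-> G2 (restrZ _ h x)) -> MRel G1 = MRel G2.
Proof.
  intros HG.
  assert (J1 = J2) as <-
    by (apply functional_extensionality; intro i; apply propositional_extensionality, e).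
  f_equal; apply functional_extensionality; intro x.
  apply propositional_extensionality; now rewrite HG, restrZ_id.
Qed.

End Tuples.

Lemma restr_join (I : Type) (E : I -> Type) (R S : mrel E) (L : I -> Prop)
  (hL1 : forall i, J_ R i /\ J_ S i -> L i)
  (hL2 : forall i, L i -> unionJ R S i) :
  restr (join R S) L hL2
  = join (restr R (interL L (J_ R)) (@interL_incl I L (J_ R)))
         (restr S (interL L (J_ S)) (@interL_incl I L (J_ S))).
Proof.
  unshelve eapply mrel_eq_reindex.
  - intros i [[l _] | [l _]]; exact l.
  - intro i; unfold unionJ, interL; simpl; split; [|tauto].
    intro l; destruct (hL2 i l); tauto.
  - intro x; simpl; split.
    + intros [y [[HR HS] <-]]; split.
      * exists (restrZ _ (fun i (hi : J_ R i) => or_introl hi) y); split; [exact HR|].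
        apply Z_ext; intros i p; unfold restrZ; simpl; apply Z_irrel.
      * exists (restrZ _ (fun i (hi : J_ S i) => or_intror hi) y); split; [exact HS|].
        apply Z_ext; intros i p; unfold restrZ; simpl; apply Z_irrel.
    + intros [[a [Ha Hax]] [b [Hb Hbx]]].
      assert (Ha_at : forall i (l : L i) (p : J_ R i), a (exist _ i p) = x (exist L i l))
        by (intros i l p; exact (restrZ_eq_at Hax _ (conj l p) p (or_introl (conj l p)))).
      assert (Hb_at : forall i (l : L i) (q : J_ S i), b (exist _ i q) = x (exist L i l))
        by (intros i l q; exact (restrZ_eq_at Hbx _ (conj l q) q (or_intror (conj l q)))).
      destruct (Z_glue (unionJ R S) _ _ (fun i (hi : J_ R i) => or_introl hi)
                  (fun i (hi : J_ S i) => or_intror hi) (fun i u => u) a b)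
        as [y [Hya Hyb]].
      { intros i p q; rewrite (Ha_at i (hL1 i (conj p q))); symmetry; apply Hb_at. }
      exists y; split; [simpl; rewrite Hya, Hyb; now split|].
      apply Z_ext; intros i l; unfold restrZ; simpl.
      destruct (hL2 i l) as [p | q].
      * rewrite <- (Ha_at i l p), <- Hya; reflexivity.
      * rewrite <- (Hb_at i l q), <- Hyb; reflexivity.
Qed.

Theorem mainTheorem11 (I : Type) (E : I -> Type)
  (hE : forall i, inhabited (E i)) (R S : mrel E) :
  (forall (L : I -> Prop)
     (hL1 : forall i, J_ R i /\ J_ S i -> L i)
     (hL2 : forall i, L i -> unionJ R S i),
     restr (join R S) L hL2
     = join (restr R (interL L (J_ R)) (@interL_incl I L (J_ R)))
            (restr S (interL L (J_ S)) (@interL_incl I L (J_ S))))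
  /\
  ((forall i, ~ (J_ R i /\ J_ S i)) ->
   forall (L : I -> Prop) (hL2 : forall i, L i -> unionJ R S i),
     restr (join R S) L hL2
     = join (restr R (interL L (J_ R)) (@interL_incl I L (J_ R)))
            (restr S (interL L (J_ S)) (@interL_incl I L (J_ S)))).
Proof.
  split.
  - intros L; apply restr_join.
  - intros Hdisj L; apply restr_join; intros i Hi; destruct (Hdisj i Hi).
Qed.
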